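(* Let $b>2$ be an integer and let $G$ be a $b$-dc-semigroup. \begin{enumerate} \item The set $U_b=\{I_b(i,k): i\in\mathbf{N},\ k\in\mathbf{N}^*\}$, endowed with the operation $I_b(i,k)\cdot I_b(j,l)=I_b(i+j,k+l)$, is an abelian semigroup. \item If $i,j\in\mathbf{N}$, $k,l\in\mathbf{N}^*$, $I_b(i,k)\subseteq G$ and $I_b(j,l)\subseteq G$, then $I_b(i,k)\cdot I_b(j,l)=I_b(i+j,k+l)\subseteq G$. \end{enumerate}
   Context: $\mathbf{N}=\{0,1,2,\dots\}$ and $\mathbf{N}^*=\mathbf{N}\setminus\{0\}$. Fix an integer base $b\ge 2$. A $b$-dc-semigroup is a subsemigroup $G$ of the multiplicative semigroup $(\mathbf{N}^*,\cdot)$ which is closed with respect to the number of digits in base $b$: whenever $x\in G$ has a base-$b$ representation with exactly $n$ digits (leading digit nonzero), every positive integer whose base-$b$ representation has exactly $n$ digits also lies in $G$; equivalently, if $x\in G$ and $b^{n-1}\le x<b^n$ then $\{y\in\mathbf{N}: b^{n-1}\le y<b^n\}\subseteq G$. For $i\in\mathbf{N}$ and $j\in\mathbf{N}^*$, $I_b(i,j)=\{x\in\mathbf{N}: b^i\le x<b^{i+j}\}$ and $I_b(i,+\infty)=\{x\in\mathbf{N}: x\ge b^i\}$. *)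

From mathcomp Require Import all_boot.
Set Implicit Arguments. Unset Strict Implicit. Unset Printing Implicit Defensive.

Definition Ib (b i j : nat) : pred nat := fun x => (b ^ i <= x) && (x < b ^ (i + j)).

(* A b-dc-semigroup: a subsemigroup of the multiplicative semigroup N^* closed w.r.t. number of base-b digits.
   x has exactly n+1 digits iff b^n <= x < b^(n+1). *)
Definition dc_semigroup (b : nat) (G : pred nat) : Prop :=
  [/\ (forall x, G x -> 0 < x),
      (forall x y, G x -> G y -> G (x * y)) &
      (forall x n, G x -> b ^ n <= x < b ^ n.+1 ->
         forall y, b ^ n <= y < b ^ n.+1 -> G y)].

From mathcomp Require Import all_boot.
From mathcomp Require Import zify.

Set Implicit Arguments. Unset Strict Implicit.

(* I_b(i,k) determines (i,k) through the powers of b it contains, so the product on U_b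
   is well defined; commutativity and associativity come from those of +.
   Every n-digit number x of I_b(i+j, k+l) shares its digit count with a product y z,
   y in I_b(i,k), z in I_b(j,l): take y = b^p, z = b^(n-p) when n < i+j+k+l-1, and
   y = (b-1) b^(i+k-1), z = (b-1) b^(j+l-1) for the top digit count, which works because
   b <= (b-1)^2 as soon as b > 2.  Digit-count closure then puts x in G. *)

Lemma mem_Ib_expn b i k m : 1 < b -> (b ^ m \in Ib b i k) = (i <= m < i + k).
Proof. by move=> b1; rewrite unfold_in /Ib /= leq_exp2l // ltn_exp2l. Qed.

Lemma eq_Ib_inj b i k i' k' : 1 < b -> 0 < k -> 0 < k' ->
  Ib b i k =i Ib b i' k' -> i = i' /\ k = k'.
Proof.
move=> b1 k0 k'0 eqI.
have E m : (i <= m < i + k) = (i' <= m < i' + k').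
  by rewrite -!(mem_Ib_expn _ _ _ b1) eqI.
by have := E i; have := E i'; have := E (i + k); have := E (i' + k'); lia.
Qed.

Lemma Ib_digits b i k x : 1 < b -> x \in Ib b i k ->
  exists2 n, i <= n < i + k & b ^ n <= x < b ^ n.+1.
Proof.
move=> b1; rewrite unfold_in /Ib /= => /andP [xl xu].
have x0 : 0 < x by apply: leq_trans xl; rewrite expn_gt0 ltnW.
exists (trunc_log b x); last by rewrite trunc_logP // trunc_log_ltn.
apply/andP; split.
  by rewrite -ltnS -(ltn_exp2l _ _ b1); apply: leq_ltn_trans xl (trunc_log_ltn _ _).
by rewrite -(ltn_exp2l _ _ b1); apply: leq_ltn_trans (trunc_logP _ _) xu.
Qed.

Lemma expn_mul_Ib b i k j l n : 1 < b -> 0 < k -> 0 < l ->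
  i + j <= n -> n.+1 < i + j + (k + l) ->
  exists y z, [/\ y \in Ib b i k, z \in Ib b j l & y * z = b ^ n].
Proof.
move=> b1 k0 l0 nl nu; pose p := minn (n - j) (i + k).-1.
exists (b ^ p), (b ^ (n - p)); rewrite !mem_Ib_expn // -expnD.
by split; [| | congr (_ ^ _)]; rewrite /p; lia.
Qed.

Lemma top_digit_in_Ib b i k : 1 < b -> 0 < k -> (b - 1) * b ^ (i + k).-1 \in Ib b i k.
Proof.
move=> b1 k0; have pb : 0 < b ^ (i + k).-1 by rewrite expn_gt0 ltnW.
have iP : b ^ i <= b ^ (i + k).-1 by rewrite leq_exp2l //; lia.
have eP : b ^ (i + k) = b * b ^ (i + k).-1 by rewrite -expnS; congr (_ ^ _); lia.
by rewrite unfold_in /Ib /= eP; apply/andP; split; nia.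
Qed.

Lemma top_digit_mul_bounds b P Q : 2 < b ->
  b ^ (P + Q).+1 <= (b - 1) * b ^ P * ((b - 1) * b ^ Q) < b ^ (P + Q).+2.
Proof.
move=> b2; have sq : b <= (b - 1) * (b - 1) by nia.
have -> : (b - 1) * b ^ P * ((b - 1) * b ^ Q) = (b - 1) * (b - 1) * b ^ (P + Q).
  by rewrite expnD mulnACA mulnA.
have pPQ : 0 < b ^ (P + Q) by rewrite expn_gt0; lia.
rewrite !expnS mulnA leq_mul2r sq orbT /= ltn_mul2r pPQ /=.
by apply: ltn_mul; lia.
Qed.

Lemma Ib_mul_digits b i k j l n : 2 < b -> 0 < k -> 0 < l ->
  i + j <= n < i + j + (k + l) ->
  exists y z, [/\ y \in Ib b i k, z \in Ib b j l & b ^ n <= y * z < b ^ n.+1].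
Proof.
move=> b2 k0 l0 /andP [nl nu]; have b1 : 1 < b by apply: ltnW.
case: (ltnP n.+1 (i + j + (k + l))) => [ntop | ntop].
  have [y [z [yI zI yz]]] := expn_mul_Ib b1 k0 l0 nl ntop.
  by exists y, z; split; rewrite // yz leqnn ltn_exp2l ?ltnSn.
exists ((b - 1) * b ^ (i + k).-1), ((b - 1) * b ^ (j + l).-1).
have -> : n = ((i + k).-1 + (j + l).-1).+1 by lia.
by split; [apply: top_digit_in_Ib.. | apply: top_digit_mul_bounds].
Qed.

Lemma dc_semigroup_mul_Ib b G i k j l : 2 < b -> dc_semigroup b G -> 0 < k -> 0 < l ->
  {subset Ib b i k <= G} -> {subset Ib b j l <= G} ->
  {subset Ib b (i + j) (k + l) <= G}.
Proof.
move=> b2 [_ GM Gd] k0 l0 GI GJ x xI.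
have [n nI xn] := Ib_digits (ltnW b2) xI.
have [y [z [yI zI yzn]]] := Ib_mul_digits b2 k0 l0 nI.
exact: Gd _ n (GM _ _ (GI _ yI) (GJ _ zI)) yzn x xn.
Qed.

Theorem lemma2p1 (b : nat) (G : pred nat) :
  2 < b -> dc_semigroup b G ->
  (* (1) U_b with I_b(i,k).I_b(j,l) = I_b(i+j,k+l) is an abelian semigroup:
         the operation is well defined on the sets, commutative and associative *)
  ((forall i k j l i' k' j' l',
      0 < k -> 0 < l -> 0 < k' -> 0 < l' ->
      Ib b i k =i Ib b i' k' -> Ib b j l =i Ib b j' l' ->
      Ib b (i + j) (k + l) =i Ib b (i' + j') (k' + l'))
   /\ (forall i k j l, 0 < k -> 0 < l ->
      Ib b (i + j) (k + l) =i Ib b (j + i) (l + k))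
   /\ (forall i k j l m n, 0 < k -> 0 < l -> 0 < n ->
      Ib b ((i + j) + m) ((k + l) + n) =i Ib b (i + (j + m)) (k + (l + n))))
  /\
  (* (2) closure of G *)
  (forall i k j l, 0 < k -> 0 < l ->
      {subset Ib b i k <= G} -> {subset Ib b j l <= G} ->
      {subset Ib b (i + j) (k + l) <= G}).
Proof.
move=> b2 dcG; have b1 : 1 < b by apply: ltnW.
split; last by move=> i k j l; apply: dc_semigroup_mul_Ib.
split.
  move=> i k j l i' k' j' l' k0 l0 k'0 l'0 eqIK eqJL.
  have [-> ->] := eq_Ib_inj b1 k0 k'0 eqIK.
  by have [-> ->] := eq_Ib_inj b1 l0 l'0 eqJL.
split; first by move=> i k j l _ _ x; rewrite (addnC i) (addnC k).
by move=> i k j l m n _ _ _ x; rewrite !addnA.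
Qed.
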